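(* Let $0<q<1$, $b<q^{-1}$, $\mathrm{v}\in\mathbb{Z}_{\geq 0}$ and $0<a<q^{\mathrm{v}}$. Define, for $x\in\mathbb{Z}_{\geq0}$, $$\check{\xi}_{\mathrm{v}}(x;a,b)=\frac{(aq^{-\mathrm{v}};q)_{\mathrm{v}}}{(bq;q)_{\mathrm{v}}}\sum_{k=0}^{\mathrm{v}}\frac{(q^{-\mathrm{v}};q)_k\,(a^{-1}bq^{\mathrm{v}+1};q)_k}{(a^{-1}q;q)_k\,(q;q)_k}\,q^{(x+1)k}.$$ Then $\check{\xi}_{\mathrm{v}}(x;a,b)>0$ for all $x\in\mathbb{Z}_{\geq 0}$.
   Context: $(z;q)_k=\prod_{i=0}^{k-1}(1-zq^i)$, $(z;q)_0=1$. The function $\check{\xi}_{\mathrm{v}}(x;a,b)$ equals the little $q$-Jacobi polynomial in universal normalisation, $\check{P}_{\mathrm{v}}(x;a,b)=\frac{(a^{-1}q^{-\mathrm{v}};q)_{\mathrm{v}}}{(bq;q)_{\mathrm{v}}}\,{}_2\phi_1(q^{-\mathrm{v}},abq^{\mathrm{v}+1};aq;q;q^{x+1})$, with $a$ replaced by $a^{-1}$ (the ''virtual state polynomial''). The case $b=0$ is included (little $q$-Laguerre case). *)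

From mathcomp Require Import all_boot all_order all_algebra.
Set Implicit Arguments. Unset Strict Implicit. Unset Printing Implicit Defensive.
Import Order.TTheory GRing.Theory Num.Theory.
Local Open Scope ring_scope.

Definition qpoch {R : ringType} (z q : R) (k : nat) : R :=
  \prod_(i < k) (1 - z * q ^+ i).

Definition xi_check {R : fieldType} (v : nat) (q a b : R) (x : nat) : R :=
  qpoch (a * q ^- v) q v / qpoch (b * q) q v *
  \sum_(k < v.+1)
     (qpoch (q ^- v) q k * qpoch (a^-1 * b * q ^+ v.+1) q k)
     / (qpoch (a^-1 * q) q k * qpoch q q k) * q ^+ ((x.+1) * k).

From mathcomp Require Import all_boot all_order all_algebra.
From mathcomp Require Import ring lra.
Import Order.TTheory GRing.Theory Num.Theory.
Local Open Scope ring_scope.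
Set Implicit Arguments. Unset Strict Implicit.

(* Up to a prefactor that is a ratio of positive q-Pochhammer symbols, the
   polynomial is the terminating series P(z) = 2phi1(A, B; C; q, z) at
   z = q^(x+1), with A = q^-n, B = b q^(n+1) / a and C = q / a > 1.
   Induct on n.  If B <= 1 all terms are nonnegative and the constant term is
   1.  Otherwise the contiguous relation
     P(z) - P(qz) = z (1-A)(1-B)/(1-C) P'(z)
   has a negative coefficient, and P' is the same kind of series for
   (n-1, a/q, bq), positive by induction; hence P(q^(x+1)) increases with x,
   and at x = 0 the q-Chu-Vandermonde sum
   P(q) = prod_i (B - C q^i) / (1 - C q^i) is a product of quotients of two
   negative numbers. *)

Lemma qpoch0 (R : nzRingType) (z q : R) : qpoch z q 0 = 1.
Proof. by rewrite /qpoch big_ord0. Qed.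

Lemma qpochS (R : nzRingType) (z q : R) k :
  qpoch z q k.+1 = (1 - z) * qpoch (z * q) q k.
Proof.
rewrite /qpoch big_ord_recl mulr1; congr (_ * _).
by apply: eq_bigr => i _; rewrite exprS mulrA.
Qed.

Lemma qpochSr (R : nzRingType) (z q : R) k :
  qpoch z q k.+1 = qpoch z q k * (1 - z * q ^+ k).
Proof. by rewrite /qpoch big_ord_recr. Qed.

Lemma qpoch_gt0 (R : numDomainType) (z q : R) k :
  (forall i, (i < k)%N -> z * q ^+ i < 1) -> 0 < qpoch z q k.
Proof. by move=> lt1; apply: prodr_gt0 => i _; rewrite subr_gt0 lt1. Qed.

Lemma invfXS_mulr (F : fieldType) (x : F) n : x != 0 -> x ^- n.+1 * x = x ^- n.
Proof. by move=> x_neq0; rewrite exprS invfM mulrAC mulVf ?mul1r. Qed.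

Definition phi21_coef {R : fieldType} (q A B C : R) k :=
  qpoch A q k * qpoch B q k / (qpoch C q k * qpoch q q k).

Definition phi21 {R : fieldType} (q A B C z : R) N :=
  \sum_(k < N) phi21_coef q A B C k * z ^+ k.

Section ContiguousRelations.
Variables (R : fieldType) (q : R).

Lemma phi21_coef0 A B C : phi21_coef q A B C 0 = 1.
Proof. by rewrite /phi21_coef !qpoch0 !mul1r invr1. Qed.

Lemma phi21_1 A B C z : phi21 q A B C z 1 = 1.
Proof. by rewrite /phi21 big_ord1 phi21_coef0 mul1r. Qed.

Hypothesis q_not_unity : forall k, q ^+ k.+1 != 1.

Let qpochqS k : qpoch q q k.+1 = qpoch q q k * (1 - q ^+ k.+1).
Proof. by rewrite qpochSr exprS. Qed.

Let unity_gap k : 1 - q ^+ k.+1 != 0.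
Proof. by rewrite subr_eq0 eq_sym q_not_unity. Qed.

Lemma phi21_coefS A B C k :
  phi21_coef q A B C k.+1 * (1 - q ^+ k.+1) =
  (1 - A) * (1 - B) / (1 - C) * phi21_coef q (A * q) (B * q) (C * q) k.
Proof.
rewrite /phi21_coef qpochqS !qpochS !invfM.
move: (qpoch q q k)^-1 (qpoch (C * q) q k)^-1 (1 - C)^-1 => Qi Ci Di.
by field; apply: unity_gap.
Qed.

Lemma phi21_coefS_shiftA A B C k :
  phi21_coef q A B C k.+1 - phi21_coef q (A * q) B C k.+1 =
  - A * (1 - B) / (1 - C) * phi21_coef q (A * q) (B * q) (C * q) k.
Proof.
rewrite /phi21_coef qpochqS (qpochS A) (qpochSr (A * q)).
rewrite !(qpochS B) !(qpochS C).
rewrite -[A * q * q ^+ k]mulrA -exprS !invfM.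
move: (qpoch q q k)^-1 (qpoch (C * q) q k)^-1 (1 - C)^-1 => Qi Ci Di.
by field; apply: unity_gap.
Qed.

Lemma phi21_shiftz A B C z N :
  phi21 q A B C z N.+1 - phi21 q A B C (q * z) N.+1 =
  z * (1 - A) * (1 - B) / (1 - C) * phi21 q (A * q) (B * q) (C * q) z N.
Proof.
rewrite /phi21 -sumrB big_ord_recl phi21_coef0 subrr add0r mulr_sumr.
apply: eq_bigr => k _; rewrite lift0 /= exprMn -mulrBr.
rewrite -{1}[z ^+ k.+1]mul1r -mulrBl.
by rewrite mulrA phi21_coefS exprS; ring.
Qed.

Lemma phi21_shiftA A B C z N :
  phi21 q A B C z N.+1 - phi21 q (A * q) B C z N.+1 =
  - A * z * (1 - B) / (1 - C) * phi21 q (A * q) (B * q) (C * q) z N.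
Proof.
rewrite /phi21 -sumrB big_ord_recl !phi21_coef0 subrr add0r mulr_sumr.
apply: eq_bigr => k _; rewrite lift0 /= -mulrBl phi21_coefS_shiftA exprS; ring.
Qed.

Hypothesis q_neq0 : q != 0.

Lemma phi21_qinvn_stationary n B C z :
  phi21 q (q ^- n) B C z n.+2 = phi21 q (q ^- n) B C z n.+1.
Proof.
rewrite /phi21 big_ord_recr /= /phi21_coef qpochSr.
by rewrite mulVf ?expf_neq0 // subrr !(mulr0, mul0r) addr0.
Qed.

Lemma q_chu_vandermonde n B C :
  (forall i, (i < n)%N -> C * q ^+ i != 1) ->
  phi21 q (q ^- n) B C q n.+1 * qpoch C q n = \prod_(i < n) (B - C * q ^+ i).
Proof.
elim: n B C => [|n IH] B C C_gap.
  by rewrite phi21_1 qpoch0 big_ord0 mulr1.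
have C_gap0 : 1 - C != 0 by rewrite subr_eq0 eq_sym -[C]mulr1 (C_gap 0%N).
move: (phi21_shiftA (q ^- n.+1) B C q n.+1).
rewrite invfXS_mulr // phi21_qinvn_stationary => /eqP.
rewrite subr_eq => /eqP ->.
have e1 : phi21 q (q ^- n) B C q n.+1 * qpoch C q n.+1 =
          \prod_(i < n) (B - C * q ^+ i) * (1 - C * q ^+ n).
  by rewrite qpochSr mulrA IH // => i /ltnW; apply: C_gap.
have e2 : phi21 q (q ^- n) (B * q) (C * q) q n.+1 * qpoch C q n.+1 =
          (1 - C) * (q ^+ n * \prod_(i < n) (B - C * q ^+ i)).
  rewrite qpochS mulrCA IH => [|i lt_in]; last by rewrite -mulrA -exprS C_gap.
  congr (_ * _); rewrite (eq_bigr (fun i : 'I_n => q * (B - C * q ^+ i))).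
    by rewrite prodrMl card_ord.
  by move=> i _; ring.
rewrite mulrDl -[(_ * phi21 _ _ _ _ _ _) * _]mulrA e2 e1 big_ord_recr /=.
rewrite mulNr invfXS_mulr //; set P := \prod_(i < n) _.
by field; rewrite C_gap0 expf_neq0.
Qed.

End ContiguousRelations.

Section Positivity.
Variables (R : realFieldType) (q : R).
Hypotheses (q_gt0 : 0 < q) (q_lt1 : q < 1).

Let q_neq0 : q != 0. Proof. by rewrite gt_eqF. Qed.

Let qpow_gt0 i : 0 < q ^+ i. Proof. exact: exprn_gt0. Qed.

Let qpow_le1 i : q ^+ i <= 1.
Proof. exact: exprn_ile1 (ltW q_gt0) (ltW q_lt1). Qed.

Let qpow_neq1 k : q ^+ k.+1 != 1.
Proof. by rewrite lt_eqF // exprn_ilt1 ?ltW. Qed.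

Lemma mulr_qpowS_lt1 b m : b < q^-1 -> b * q ^+ m.+1 < 1.
Proof.
move=> b_lt; have bq_lt1 : b * q < 1 by rewrite -ltr_pdivlMr // div1r.
have [b_le0 | b_gt0] := lerP b 0.
  by apply: le_lt_trans _ ltr01; rewrite pmulr_lle0.
apply: le_lt_trans bq_lt1; apply: ler_wpM2l; first exact: ltW.
exact: ler_iXnr (ltW q_gt0) (ltW q_lt1).
Qed.

Lemma phi21_ge1 A B C z N :
  0 <= z -> (forall i, (i < N)%N -> 0 <= (1 - A * q ^+ i) / (1 - C * q ^+ i)) ->
  (forall i, (i < N)%N -> 0 <= 1 - B * q ^+ i) -> 1 <= phi21 q A B C z N.+1.
Proof.
move=> z_ge0 AC_ge0 B_ge0.
rewrite /phi21 big_ord_recl phi21_coef0 mul1r lerDl.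
apply: sumr_ge0 => k _; apply: mulr_ge0; last exact: exprn_ge0.
rewrite /phi21_coef -mulf_div /qpoch -!prodf_div.
have le_kN i : (i < lift ord0 k)%N -> (i < N)%N.
  by rewrite lift0 => /leq_trans/(_ (ltn_ord k)).
apply: mulr_ge0; apply: prodr_ge0 => i _; first exact/AC_ge0/le_kN.
by rewrite divr_ge0 ?B_ge0 ?le_kN // -exprS subr_ge0.
Qed.

Lemma phi21_at_q_le A B C N x :
  (1 - A) * (1 - B) / (1 - C) <= 0 ->
  (forall y, 0 <= phi21 q (A * q) (B * q) (C * q) (q ^+ y.+1) N) ->
  phi21 q A B C q N.+1 <= phi21 q A B C (q ^+ x.+1) N.+1.
Proof.
move=> K_le0 shifted_ge0; elim: x => [|x IHx]; first by rewrite expr1.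
apply: le_trans IHx _; rewrite -subr_le0 [q ^+ x.+2]exprS phi21_shiftz //.
apply: mulr_le0_ge0 (shifted_ge0 x); rewrite -!mulrA.
by apply: mulr_ge0_le0; [exact: ltW | rewrite mulrA].
Qed.

Lemma phi21_qinvn_at_q_gt0 n B C :
  (forall i, (i < n)%N -> 0 < (B - C * q ^+ i) * (1 - C * q ^+ i)) ->
  0 < phi21 q (q ^- n) B C q n.+1.
Proof.
move=> BC_gt0.
have C_gap i : (i < n)%N -> C * q ^+ i != 1.
  by move/BC_gt0; apply: contraTneq => ->; rewrite subrr mulr0 ltxx.
have := q_chu_vandermonde qpow_neq1 q_neq0 B C_gap.
set D := qpoch C q n => CV.
have PD_gt0 : 0 < \prod_(i < n) (B - C * q ^+ i) * D.
  by rewrite /D /qpoch -big_split; apply: prodr_gt0 => i _; apply: BC_gt0.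
have D_neq0 : D != 0 by apply: contraTneq PD_gt0 => ->; rewrite mulr0 ltxx.
by move: PD_gt0; rewrite -CV -mulrA pmulr_lgt0 // -expr2 exprn_even_gt0.
Qed.

Lemma qinvn_qpow_gt1 n i : (i < n)%N -> 1 < q ^- n * q ^+ i.
Proof. by move=> lt_in; rewrite mulrC ltr_pdivlMr // mul1r ltr_iXn2l. Qed.

Lemma virtual_C_gt1 n a i :
  0 < a -> a < q ^+ n -> (i < n)%N -> 1 < a^-1 * q * q ^+ i.
Proof.
move=> a_gt0 a_lt lt_in; rewrite -mulrA -exprS mulrC ltr_pdivlMr // mul1r.
by apply: lt_le_trans a_lt _; rewrite ler_iXn2l.
Qed.

Lemma virtual_B_lt_C n a b i :
  0 < a -> b < q^-1 -> (i < n)%N -> a^-1 * b * q ^+ n.+1 < a^-1 * q * q ^+ i.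
Proof.
move=> a_gt0 b_lt lt_in; rewrite -!mulrA ltr_pM2l ?invr_gt0 // -exprS.
have -> : q ^+ n.+1 = q ^+ (n - i.+1).+1 * q ^+ i.+1.
  by rewrite -exprD addSn subnK.
by rewrite mulrA gtr_pMl // mulr_qpowS_lt1.
Qed.

Lemma phi21_virtual_gt0 n a b x :
  0 < a -> a < q ^+ n -> b < q^-1 ->
  0 < phi21 q (q ^- n) (a^-1 * b * q ^+ n.+1) (a^-1 * q) (q ^+ x.+1) n.+1.
Proof.
elim: n a b x => [|n IH] a b x a_gt0 a_lt b_lt; first by rewrite phi21_1.
set A := q ^- n.+1; set B := a^-1 * b * q ^+ n.+2; set C := a^-1 * q.
have C_gt1 i : (i < n.+1)%N -> 1 < C * q ^+ i by apply: virtual_C_gt1.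
have [B_le1 | B_gt1] := lerP B 1.
  apply: lt_le_trans ltr01 (phi21_ge1 _ _ _) => [|i lt_in|i _].
  - exact: exprn_ge0 (ltW q_gt0).
  - by rewrite -divrNN divr_ge0 // oppr_ge0 subr_le0 ltW ?qinvn_qpow_gt1 ?C_gt1.
  - by have := qpow_gt0 i; have := qpow_le1 i; rewrite subr_ge0; nra.
have shifted_gt0 y : 0 < phi21 q (A * q) (B * q) (C * q) (q ^+ y.+1) n.+1.
  have a_neq0 : a != 0 by rewrite gt_eqF.
  have -> : A * q = q ^- n by rewrite invfXS_mulr.
  have -> : B * q = (a / q)^-1 * (b * q) * q ^+ n.+1.
    by rewrite /B !exprS; field; rewrite a_neq0 q_neq0.
  have -> : C * q = (a / q)^-1 * q by rewrite /C; field; rewrite a_neq0 q_neq0.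
  apply: IH; first exact: divr_gt0.
    by rewrite ltr_pdivrMr // -exprSr.
  by apply: lt_trans (mulr_qpowS_lt1 0 b_lt) _; rewrite invf_gt1.
have C_gt1' : 1 < C by rewrite -[C]mulr1 -(expr0 q) C_gt1.
apply: lt_le_trans _ (phi21_at_q_le x _ _) => [||y]; last exact: ltW.
  apply: phi21_qinvn_at_q_gt0 => i lt_in.
  by rewrite nmulr_rgt0 ?subr_lt0 ?C_gt1 ?virtual_B_lt_C.
have A_gt1 : 1 < A by rewrite -[A]mulr1 -(expr0 q) qinvn_qpow_gt1.
by rewrite ltW // pmulr_rlt0 ?invr_lt0 ?subr_lt0 // nmulr_rgt0 subr_lt0.
Qed.
End Positivity.

Lemma xi_checkE (R : fieldType) v (q a b : R) x :
  xi_check v q a b x = qpoch (a * q ^- v) q v / qpoch (b * q) q v *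
    phi21 q (q ^- v) (a^-1 * b * q ^+ v.+1) (a^-1 * q) (q ^+ x.+1) v.+1.
Proof. by congr (_ * _); apply: eq_bigr => k _; rewrite exprM. Qed.

Theorem mainTheorem2 (R : realFieldType) (q a b : R) (v : nat)
  (hq0 : 0 < q) (hq1 : q < 1) (hb : b < q^-1)
  (ha0 : 0 < a) (ha1 : a < q ^+ v) :
  forall x : nat, 0 < xi_check v q a b x.
Proof.
move=> x; rewrite xi_checkE mulr_gt0 ?phi21_virtual_gt0 //.
have qpow_le1 i : q ^+ i <= 1 by rewrite exprn_ile1 ?ltW.
apply: divr_gt0; apply: qpoch_gt0 => i lt_iv.
  rewrite mulrAC ltr_pdivrMr ?exprn_gt0 // mul1r.
  by apply: le_lt_trans _ ha1; rewrite ler_piMr ?(ltW ha0).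
by rewrite -mulrA -exprS mulr_qpowS_lt1.
Qed.
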